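(* Let $G$ be a soluble group which is not finitely generated and such that $G\neq\langle K,L\rangle$ for any proper subgroups $K,L$ of $G$. Then $G/[G,G]$ is a quasicyclic $p$-group for some prime $p$.
   Context: A quasicyclic $p$-group is a Prüfer group $C_{p^\infty}$. *)

From mathcomp Require Import all_boot all_order all_algebra.
From Stdlib Require Import List.
Set Implicit Arguments. Unset Strict Implicit. Unset Printing Implicit Defensive.
Import Order.TTheory GRing.Theory Num.Theory.

Record group_axioms (G : Type) (mul : G -> G -> G) (one : G) (inv : G -> G) : Prop :=
  GroupAxioms {
    mulA : forall x y z, mul x (mul y z) = mul (mul x y) z;
    mul1g : forall x, mul one x = x;
    mulg1 : forall x, mul x one = x;
    mulVg : forall x, mul (inv x) x = one;
    mulgV : forall x, mul x (inv x) = one }.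

Section GroupDefs.
Variables (G : Type) (mul : G -> G -> G) (one : G) (inv : G -> G).

Definition is_subgroup (H : G -> Prop) : Prop :=
  H one /\ (forall x y, H x -> H y -> H (mul x y)) /\ (forall x, H x -> H (inv x)).

Definition gen (A : G -> Prop) : G -> Prop :=
  fun x => forall H, is_subgroup H -> (forall a, A a -> H a) -> H x.

Definition proper_subgroup (H : G -> Prop) : Prop :=
  is_subgroup H /\ exists x, ~ H x.

Definition finitely_generated : Prop :=
  exists l : list G, forall x, gen (fun y => In y l) x.

Definition commg (x y : G) : G := mul (mul (inv x) (inv y)) (mul x y).

Definition commg_sub (H K : G -> Prop) : G -> Prop :=
  gen (fun z => exists h k, H h /\ K k /\ z = commg h k).

Fixpoint derived (n : nat) : G -> Prop :=
  match n with
  | O => fun _ => True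
  | S m => commg_sub (derived m) (derived m)
  end.

Definition soluble : Prop :=
  exists n, forall x, derived n x -> x = one.

Definition rat_is_int (q : rat) : Prop := q \is a Num.int.

(* q + Z lies in the quasicyclic p-group Z[1/p]/Z, inside Q/Z *)
Definition p_adic_frac (p : nat) (q : rat) : Prop :=
  exists n : nat, rat_is_int (q * (p ^ n)%:R).

(* G/[G,G] is isomorphic to the quasicyclic (Pruefer) p-group C_{p^oo},
   realised as Z[1/p]/Z: phi induces (mod Z) an isomorphism of G/[G,G]
   onto Z[1/p]/Z. *)
Definition abelianization_quasicyclic (p : nat) : Prop :=
  exists phi : G -> rat,
    (forall x y, rat_is_int (phi (mul x y) - phi x - phi y)) /\
    (forall x, p_adic_frac p (phi x)) /\
    (forall q, p_adic_frac p q -> exists x, rat_is_int (phi x - q)) /\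
    (forall x, rat_is_int (phi x) <-> derived 1 x).

End GroupDefs.

From HB Require Import structures.
From Pilot Require Import Defs.
From mathcomp Require Import all_boot all_order all_algebra.
From mathcomp Require Import boolp classical_sets.
From mathcomp Require Import zify ring.
Set Implicit Arguments. Unset Strict Implicit. Unset Printing Implicit Defensive.
Import Order.TTheory GRing.Theory Num.Theory.

(* The abelianization A = G/[G,G] is nontrivial (G = [G,G] would make the
   soluble group G trivial, hence finitely generated), it is not cyclic and it
   is not the sum of two proper subgroups: preimages of proper subgroups of A
   are proper subgroups of G containing [G,G], and if A were generated by the
   image of g then G would be generated by <g> and [G,G].

   Such an abelian group A is quasicyclic.  For a maximal subgroup M avoiding
   some element, A/M is torsion; splitting a torsion quotient into its q- and
   q'-parts at a prime q and using that A is not a sum of two proper subgroups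
   shows that A is torsion, and then that A is a p-group.  A maximal subgroup
   containing pA and avoiding x would give A = M + Zx, so A is p-divisible.
   Choosing y_0 of order p and p y_(n+1) = y_n, the union D of the <y_n>
   satisfies A = D + K for a maximal subgroup K avoiding y_0, so D = A, and
   k y_n |-> k / p^(n+1) is an isomorphism onto Z[1/p]/Z. *)

Local Open Scope ring_scope.

Section AddSubgroups.
Variable A : zmodType.
Implicit Types (H K M : A -> Prop) (a b w : A).

Definition addsubgroup H := H 0 /\ (forall a b, H a -> H b -> H (a - b)).

Definition addsum H K a := exists h k, [/\ H h, K k & a = h + k].

Definition zspan b a := exists z : int, a = b *~ z.

Definition torsion_mod M := forall a, exists2 n, (0 < n)%N & M (a *+ n).

(* For a subgroup [M]: [M] is maximal among the subgroups avoiding [w]. *)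
Definition maximal_avoiding M w :=
  ~ M w /\ forall a, ~ M a -> exists m z, M m /\ w = m + a *~ z.

Lemma addsubgroupN H a : addsubgroup H -> H a -> H (- a).
Proof. by move=> [H0 HB] Ha; rewrite -sub0r; apply: HB. Qed.

Lemma addsubgroupD H a b : addsubgroup H -> H a -> H b -> H (a + b).
Proof.
by move=> sH Ha Hb; rewrite -(opprK b); apply: sH.2 => //; apply: addsubgroupN.
Qed.

Lemma addsubgroupMn H a n : addsubgroup H -> H a -> H (a *+ n).
Proof.
move=> sH Ha; elim: n => [|n IH]; first by rewrite mulr0n; exact: sH.1.
by rewrite mulrS; apply: addsubgroupD.
Qed.

Lemma addsubgroupMz H a z : addsubgroup H -> H a -> H (a *~ z).
Proof.
move=> sH Ha; case: z => n; first by rewrite -pmulrn; apply: addsubgroupMn.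
by rewrite NegzE mulrNz -pmulrn; apply: addsubgroupN => //; apply: addsubgroupMn.
Qed.

Lemma addsubgroupMabsz H a z : addsubgroup H -> H (a *~ z) -> H (a *+ `|z|%N).
Proof.
move=> sH; case: z => n /=; first by rewrite -pmulrn.
rewrite NegzE mulrNz -pmulrn => Hn; rewrite -(opprK (a *+ n.+1)).
exact: addsubgroupN.
Qed.

Lemma addsubgroup_coprime H a m n :
  addsubgroup H -> H (a *+ m) -> H (a *+ n) -> coprime m n -> H a.
Proof.
move=> sH Hm Hn cmn.
have cz : coprimez m%:Z n%:Z by rewrite coprimezE.
have [[u v] /= e] := elimT (coprimezP _ _) cz.
have -> : a = (a *+ m) *~ u + (a *+ n) *~ v.
  by rewrite !pmulrn -!mulrzA -mulrzDr (mulrC m%:Z) (mulrC n%:Z) e mulr1z.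
by apply: addsubgroupD => //; apply: addsubgroupMz.
Qed.

Lemma addsubgroup0 : addsubgroup (fun a => a = 0).
Proof. by split => // a b -> ->; rewrite subr0. Qed.

Lemma addsubgroupI H K : addsubgroup H -> addsubgroup K ->
  addsubgroup (fun a => H a /\ K a).
Proof. by move=> [H0 HB] [K0 KB]; split => // a b [? ?] [? ?]; split; auto. Qed.

Lemma addsubgroup_zspan b : addsubgroup (zspan b).
Proof.
split; first by exists 0; rewrite mulr0z.
by move=> _ _ [z ->] [w ->]; exists (z - w); rewrite mulrzBr.
Qed.

Lemma exists_maximal_avoiding H w : addsubgroup H -> ~ H w ->
  exists M, [/\ addsubgroup M, forall h, H h -> M h & maximal_avoiding M w].
Proof.
move=> sH Hw.
pose P (B : set A) := [/\ forall a b, B a -> B b -> B (a - b), ~ B w &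
  forall h b, H h -> B b -> B (h + b)].
have [M [[MB Mw MH] Mmax]] :
    exists M, P M /\ forall B, (M `<` B)%classic -> ~ P B.
  apply: Zorn_bigcup => F FP Ftot; split.
  - move=> a b [X FX Xa] [Y FY Yb].
    have [XY|YX] := Ftot X Y FX FY.
      by exists Y => //; case: (FP Y FY) => + _ _; apply => //; apply: XY.
    by exists X => //; case: (FP X FX) => + _ _; apply => //; apply: YX.
  - by move=> [X FX]; case: (FP X FX).
  - by move=> h b Hh [X FX Xb]; exists X => //; case: (FP X FX) => _ _; apply.
have M0 : M 0.
  apply: contrapT => M0; apply: (Mmax H); last first.
    by split => //; [exact: sH.2 | move=> h b; apply: addsubgroupD].
  split; first by move=> x Mx; case: M0; rewrite -(subrr x); apply: MB.
  by move/(_ 0 sH.1).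
exists M; split => //; first by move=> h Hh; rewrite -(addr0 h); apply: MH.
split=> // a Ma; apply: contrapT => Hn.
apply: (Mmax (fun x => exists m z, M m /\ x = m + a *~ z)).
  split; first by move=> x Mx; exists x, 0; rewrite mulr0z addr0.
  by move=> sub; apply: Ma; apply: sub; exists 0, 1; rewrite add0r mulr1z.
split.
- move=> _ _ [m [z [Mm ->]]] [m' [z' [Mm' ->]]]; exists (m - m'), (z - z').
  by split; [apply: MB | rewrite mulrzBr opprD addrACA].
- by move=> [m [z [Mm ew]]]; apply: Hn; exists m, z.
- move=> h _ Hh [m [z [Mm ->]]]; exists (h + m), z.
  by split; [apply: MH | rewrite addrA].
Qed.

(* If [a] lies outside [M] then [w = m1 + k a] with [k != 0]; if [2k a] lies
   outside [M] too then also [w = m2 + 2jk a], so [k (1 - 2j) a] is in [M]. *)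
Lemma maximal_avoiding_torsion M w :
  addsubgroup M -> maximal_avoiding M w -> torsion_mod M.
Proof.
move=> sM [Mw Mmax] a.
have nz c : c != 0 -> M (a *~ c) -> exists2 n, (0 < n)%N & M (a *+ n).
  by move=> c0 Mc; exists `|c|%N; [rewrite absz_gt0 | exact: addsubgroupMabsz].
have [Ma|Ma] := pselect (M a); first by exists 1%N; rewrite ?mulr1n.
have [m1 [k [Mm1 e1]]] := Mmax a Ma.
have k0 : k != 0.
  by apply: contra_notN Mw => /eqP k0; rewrite e1 k0 mulr0z addr0.
have [M2|M2] := pselect (M (a *~ (k * 2))).
  by apply: (nz (k * 2)) => //; rewrite mulf_neq0.
have [m2 [j [Mm2 e2]]] := Mmax _ M2.
apply: (nz (k * (1 - 2 * j))).
  by rewrite mulf_neq0 //; apply/eqP => h; have : (1 - 2 * j = 0)%R by []; lia.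
have -> : a *~ (k * (1 - 2 * j)) = m2 - m1.
  have : m1 + a *~ k = m2 + a *~ (k * 2) *~ j by rewrite -e1 -e2.
  rewrite -mulrzA => h.
  rewrite mulrBr mulr1 mulrA mulrzBr -(addKr m1 (a *~ k)) h.
  by rewrite addrA addrK addrC.
exact: sM.2.
Qed.

Lemma torsion_modI H K : addsubgroup H -> addsubgroup K ->
  torsion_mod H -> torsion_mod K -> torsion_mod (fun a => H a /\ K a).
Proof.
move=> sH sK tH tK a; have [m m0 Hm] := tH a; have [n n0 Kn] := tK a.
exists (m * n)%N; first by rewrite muln_gt0 m0.
split; first by rewrite mulrnA; apply: addsubgroupMn.
by rewrite mulnC mulrnA; apply: addsubgroupMn.
Qed.

Lemma exists_prime_order a : a <> 0 -> (exists2 n, (0 < n)%N & a *+ n = 0) ->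
  exists p (x : A), [/\ prime p, x <> 0 & x *+ p = 0].
Proof.
move=> a0 [n0 n00 an0].
have ex : exists n, (0 < n)%N && (a *+ n == 0) by exists n0; rewrite n00 an0 eqxx.
case: (ex_minnP ex) => n /andP[n_gt0 /eqP an] nmin.
have n_gt1 : (1 < n)%N.
  by case: n n_gt0 an {nmin} => [|[|n]] //= _; rewrite mulr1n.
have pn : (pdiv n %| n)%N := pdiv_dvd n.
exists (pdiv n), (a *+ (n %/ pdiv n)); split; first exact: pdiv_prime.
  move=> e; have := nmin (n %/ pdiv n)%N.
  rewrite divn_gt0 ?pdiv_gt0 // (dvdn_leq n_gt0 pn) e eqxx => /(_ isT).
  by rewrite leqNgt ltn_Pdiv ?prime_gt1 ?pdiv_prime.
by rewrite -mulrnA divnK.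
Qed.

End AddSubgroups.

Arguments addsubgroup0 {A}.

Definition no_proper_sum_cover (A : zmodType) :=
  forall H K : A -> Prop, addsubgroup H -> addsubgroup K ->
  (forall a, addsum H K a) -> (forall a, H a) \/ (forall a, K a).

Section NoProperSumCover.
Variable A : zmodType.
Hypothesis cover : no_proper_sum_cover A.
Implicit Types (C H K M : A -> Prop) (a b x y : A).

(* For [C (N a)] write [N = q^k m] with [m] prime to [q]; a Bezout relation
   [u q^k + v m = 1] splits [a] into a [q]-part and a [q']-part modulo [C]. *)
Lemma torsion_mod_primary_or_coprime C q :
  addsubgroup C -> prime q -> torsion_mod C ->
  (forall a, exists k, C (a *+ q ^ k)) \/
  (forall a, exists2 n, coprime n q & C (a *+ n)).
Proof.
move=> sC q_pr tC; apply: cover.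
- split; first by exists 0%N; rewrite mul0rn; exact: sC.1.
  move=> a b [k Ck] [l Cl]; exists (k + l)%N.
  rewrite mulrnBl expnD.
  apply: sC.2; first by rewrite mulrnA; apply: addsubgroupMn.
  by rewrite mulnC mulrnA; apply: addsubgroupMn.
- split; first by exists 1%N; rewrite ?mul0rn ?coprime1n //; exact: sC.1.
  move=> a b [n cn Cn] [m cm Cm]; exists (n * m)%N; first by rewrite coprimeMl cn.
  rewrite mulrnBl; apply: sC.2; first by rewrite mulrnA; apply: addsubgroupMn.
  by rewrite mulnC mulrnA; apply: addsubgroupMn.
- move=> a; have [N N_gt0 CN] := tC a.
  have [m cqm eN] := pfactor_coprime q_pr N_gt0; set k := logn q N in eN.
  have cz : coprimez (q ^ k)%N%:Z m%:Z.
    by rewrite coprimezE /= coprimeXl // coprime_sym.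
  have [[u v] /= e] := elimT (coprimezP _ _) cz.
  have CNz z : C (a *+ N *~ z) by apply: addsubgroupMz.
  exists ((a *+ m) *~ v), ((a *+ q ^ k) *~ u); split.
  + exists k; have -> : (a *+ m) *~ v *+ q ^ k = (a *+ N) *~ v.
      by rewrite eN !pmulrn -!mulrzA; congr (_ *~ _); rewrite PoszM; ring.
    exact: CNz.
  + exists m; first by rewrite coprime_sym.
    have -> : (a *+ q ^ k) *~ u *+ m = (a *+ N) *~ u.
      by rewrite eN !pmulrn -!mulrzA; congr (_ *~ _); rewrite PoszM; ring.
    exact: CNz.
  + rewrite !pmulrn -!mulrzA addrC -mulrzDr (mulrC (q ^ k)%N%:Z) (mulrC m%:Z).
    by rewrite e mulr1z.
Qed.

Lemma zspan_multiple_notin y q :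
  (forall n, (0 < n)%N -> y *+ n <> 0) -> (1 < q)%N -> ~ zspan (y *+ q) y.
Proof.
move=> y_inf q_gt1 [z ez].
have c0 : q%:Z * z - 1 != 0.
  apply/eqP => h; have /(congr1 absz) : (q%:Z * z = 1)%R.
    by apply/eqP; rewrite -subr_eq0 h.
  rewrite abszM /= => /eqP; rewrite muln_eq1 => /andP[/eqP q1 _].
  by rewrite q1 in q_gt1.
apply: (y_inf (absz (q%:Z * z - 1)%R)); first by rewrite absz_gt0.
apply: (@addsubgroupMabsz _ (fun a => a = 0)); first exact: addsubgroup0.
by rewrite mulrzBr mulr1z mulrzA -pmulrn -ez subrr.
Qed.

(* An element [y] of infinite order is avoided by maximal subgroups [K2 ⊇ 2y]
   and [K3 ⊇ 3y]; splitting [K2 ∩ K3] at the prime 2 pulls [y] into one of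
   them. *)
Lemma torsion_of_no_proper_sum_cover : torsion_mod (fun a : A => a = 0).
Proof.
move=> y; apply: contrapT => y_tor.
have y_inf n : (0 < n)%N -> y *+ n <> 0 by move=> n0 e; apply: y_tor; exists n.
have [K2 [sK2 K2y2 K2max]] := exists_maximal_avoiding
  (addsubgroup_zspan (y *+ 2)) (zspan_multiple_notin y_inf (isT : 1 < 2)%N).
have [K3 [sK3 K3y3 K3max]] := exists_maximal_avoiding
  (addsubgroup_zspan (y *+ 3)) (zspan_multiple_notin y_inf (isT : 1 < 3)%N).
have in_span q : zspan (y *+ q) (y *+ q) by exists 1; rewrite mulr1z.
have tC := torsion_modI sK2 sK3 (maximal_avoiding_torsion sK2 K2max)
  (maximal_avoiding_torsion sK3 K3max).
case: (torsion_mod_primary_or_coprime (addsubgroupI sK2 sK3) (isT : prime 2) tC).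
- move=> /(_ y) [k [_ K3k]]; apply: K3max.1.
  apply: (addsubgroup_coprime sK3 K3k (K3y3 _ (in_span 3%N))).
  by rewrite coprimeXl.
- move=> /(_ y) [n cn [K2n _]]; apply: K2max.1.
  exact: (addsubgroup_coprime sK2 K2n (K2y2 _ (in_span 2%N)) cn).
Qed.

Lemma pgroup_of_prime_order p x : prime p -> x <> 0 -> x *+ p = 0 ->
  forall a, exists k, a *+ p ^ k = 0.
Proof.
move=> p_pr x0 xp.
case: (torsion_mod_primary_or_coprime addsubgroup0 p_pr
  torsion_of_no_proper_sum_cover) => [pgroup|/(_ x) [n cn xn]].
  exact: pgroup.
by exfalso; apply: x0; apply: (addsubgroup_coprime addsubgroup0 xn xp cn).
Qed.

Definition multiples n a := exists b, a = b *+ n.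

Lemma addsubgroup_multiples n : addsubgroup (multiples n).
Proof.
split; first by exists 0; rewrite mul0rn.
by move=> _ _ [b ->] [b' ->]; exists (b - b'); rewrite mulrnBl.
Qed.

Lemma divisible_of_not_cyclic p : prime p ->
  (forall x, exists a, ~ zspan x a) -> forall a, multiples p a.
Proof.
move=> p_pr not_cyclic x; apply: contrapT => px.
have [M [sM pM [Mx Mmax]]] :=
  exists_maximal_avoiding (addsubgroup_multiples p) px.
have [M_full|x_gen] : (forall a, M a) \/ (forall a, zspan x a).
  apply: cover => //; first exact: addsubgroup_zspan.
  move=> a; have [Ma|Ma] := pselect (M a).
    by exists a, 0; split => //; [exists 0; rewrite mulr0z | rewrite addr0].
  have [m [k [Mm e]]] := Mmax a Ma.
  have [pk|pk] := boolP (p%:Z %| k)%Z.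
    exfalso; apply: Mx; rewrite e; apply: addsubgroupD => //.
    by rewrite -(divzK pk) mulrzA -pmulrn; apply: pM; exists (a *~ (k %/ p)%Z).
  have ck : coprimez k p%:Z.
    by rewrite coprimezE coprime_sym prime_coprime // -dvdzE.
  have [[u v] /= euv] := elimT (coprimezP _ _) ck.
  exists ((a *+ p) *~ v - m *~ u), (x *~ u); split; [|by exists u|].
    by apply: sM.2; apply: addsubgroupMz => //; apply: pM; exists a.
  rewrite e mulrzDl addrA subrK pmulrn -!mulrzA -mulrzDr.
  by rewrite (mulrC p%:Z) (mulrC k) addrC euv mulr1z.
  exact: Mx (M_full x).
by have [a] := not_cyclic x; apply; apply: x_gen.
Qed.

Section Tower.
Variables (p : nat) (x1 : A) (g : A -> A).
Hypothesis g_div : forall a, g a *+ p = a.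
Local Notation y n := (iter n g x1).
Implicit Types (z w : int).

Lemma tower_lift n k : y n = y (k + n) *+ p ^ k.
Proof.
elim: k => [|k IH]; first by rewrite expn0 mulr1n.
by rewrite IH addSn iterS expnS mulrnA g_div.
Qed.

Lemma tower_liftz n z m : y n *~ z = y (m + n) *~ (z * (p ^ m)%N%:Z).
Proof. by rewrite (tower_lift n m) pmulrn -mulrzA mulrC. Qed.

Definition tower_span a := exists n z, a = y n *~ z.

Lemma addsubgroup_tower_span : addsubgroup tower_span.
Proof.
split; first by exists 0%N, 0; rewrite mulr0z.
move=> _ _ [n [z ->]] [m [w ->]].
exists (m + n)%N, (z * (p ^ m)%N%:Z - w * (p ^ n)%N%:Z).
by rewrite mulrzBr -tower_liftz [(m + n)%N]addnC -tower_liftz.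
Qed.

(* Write [a p = y_n z + k] and [a = y_(n+1) z + a']; then [a' p = k] lies in
   [K], and if [a'] is not in [K] then [x1 = m + j a'] with [j] prime to [p],
   which expresses [a'] through [x1], [m] and [k]. *)
Lemma addsum_tower_span_div K : prime p -> addsubgroup K ->
  maximal_avoiding K x1 ->
  forall a, addsum tower_span K (a *+ p) -> addsum tower_span K a.
Proof.
move=> p_pr sK [Kx1 Kmax] a [d [k [[n [z ed]] Kk e]]].
pose d' := y n.+1 *~ z.
have d'p : d' *+ p = d.
  by rewrite /d' pmulrn -mulrzA mulrC mulrzA -pmulrn g_div ed.
have a'p : (a - d') *+ p = k by rewrite mulrnBl d'p e addrAC subrr add0r.
have Dd' : tower_span d' by exists n.+1, z.
have [Ka'|Ka'] := pselect (K (a - d')).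
  by exists d', (a - d'); split => //; rewrite addrC subrK.
have [m [j [Km ex1]]] := Kmax _ Ka'.
have [pj|pj] := boolP (p%:Z %| j)%Z.
  exfalso; apply: Kx1; rewrite ex1; apply: addsubgroupD => //.
  by rewrite -(divzK pj) mulrC mulrzA -pmulrn a'p; apply: addsubgroupMz.
have cj : coprimez j p%:Z.
  by rewrite coprimezE coprime_sym prime_coprime // -dvdzE.
have [[u v] /= euv] := elimT (coprimezP _ _) cj.
have ea' : a - d' = (x1 - m) *~ u + k *~ v.
  rewrite ex1 addrAC subrr add0r -a'p pmulrn -!mulrzA -mulrzDr.
  by rewrite (mulrC j) (mulrC p%:Z) euv mulr1z.
exists (d' + x1 *~ u), (k *~ v - m *~ u); split.
- by apply: addsubgroupD => //; [exact: addsubgroup_tower_span | exists 0%N, u].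
- by apply: sK.2; apply: addsubgroupMz.
- by rewrite -[a](subrK d') ea' mulrzBl addrC !addrA [LHS]addrAC.
Qed.

Lemma tower_span_full : prime p -> x1 <> 0 ->
  (forall a, exists k, a *+ p ^ k = 0) -> forall a, tower_span a.
Proof.
move=> p_pr x1_neq0 pgroup.
have [K [sK _ Kmax]] := exists_maximal_avoiding addsubgroup0 x1_neq0.
have cover_tK a : addsum tower_span K a.
  have [k] := pgroup a; elim: k a => [|k IH] a ak.
    exists 0, 0; split; [by exists 0%N, 0; rewrite mulr0z | exact: sK.1 |].
    by move: ak; rewrite expn0 mulr1n => ->; rewrite addr0.
  by apply: addsum_tower_span_div => //; apply: IH; rewrite -mulrnA -expnS.
case: (cover addsubgroup_tower_span sK cover_tK) => // K_full.
by exfalso; apply: Kmax.1; apply: K_full.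
Qed.

Hypotheses (p_pr : prime p) (x1_neq0 : x1 <> 0) (x1p : x1 *+ p = 0).

Lemma natr_expp_neq0 k : ((p ^ k)%N%:R : rat) != 0.
Proof. by rewrite pnatr_eq0 expn_eq0 negb_and -lt0n prime_gt0. Qed.

Lemma tower_expn n : y n *+ p ^ n = x1.
Proof. by have := tower_lift 0 n; rewrite addn0 /= => <-. Qed.

Lemma tower_mulz_eq0 n z : y n *~ z = 0 <-> ((p ^ n.+1)%N%:Z %| z)%Z.
Proof.
split; last first.
  move=> /divzK <-; rewrite mulrC mulrzA -pmulrn expnSr mulrnA tower_expn x1p.
  by rewrite mul0rz.
move=> yz; set b := y n in yz *.
have bP : b *~ (p ^ n.+1)%N%:Z = 0.
  by rewrite -pmulrn expnSr mulrnA tower_expn.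
have [u [v e]] := Bezoutz z (p ^ n.+1)%N%:Z.
have bgcd : b *~ gcdz z (p ^ n.+1)%N%:Z = 0.
  by rewrite -e mulrzDr (mulrC u) (mulrC v) !mulrzA yz bP !mul0rz addr0.
apply/gcdz_idPr; move: bgcd; rewrite /gcdz /=.
have := dvdn_gcdr `|z|%N (p ^ n.+1); case/(dvdn_pfactor _ _ p_pr) => j jle ->.
have [jn|] := ltnP j n.+1; last first.
  by move=> nj; have -> : j = n.+1 by apply/eqP; rewrite eqn_leq jle.
move=> bj; exfalso; apply: x1_neq0; rewrite -(tower_expn n) -/b.
have -> : (p ^ n = p ^ j * p ^ (n - j))%N by rewrite -expnD subnKC.
by rewrite mulrnA [b *+ _]pmulrn bj mul0rn.
Qed.

(* [y_n] corresponds to [1/p^(n+1)] in [Z[1/p]/Z]. *)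
Definition tower_coord n (z : int) : rat := z%:~R / (p ^ n.+1)%N%:R.

Lemma tower_coordB n z w :
  tower_coord n (z - w) = tower_coord n z - tower_coord n w.
Proof. by rewrite /tower_coord intrB mulrBl. Qed.

Lemma tower_coordD n z w :
  tower_coord n (z + w) = tower_coord n z + tower_coord n w.
Proof. by rewrite /tower_coord intrD mulrDl. Qed.

Lemma tower_coord_lift n z m :
  tower_coord (m + n) (z * (p ^ m)%N%:Z) = tower_coord n z.
Proof.
have p_neq0 : (p%:R : rat) != 0 := natr_expp_neq0 1.
rewrite /tower_coord intrM -pmulrn !natrX !exprS exprD.
by field; rewrite p_neq0 !expf_neq0.
Qed.

Lemma tower_coord_intP n z :
  rat_is_int (tower_coord n z) <-> ((p ^ n.+1)%N%:Z %| z)%Z.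
Proof.
have P_neq0 := natr_expp_neq0 n.+1.
split; first move=> /intrP [c ec].
  by apply/dvdzP; exists c; apply: (@intr_inj rat); rewrite intrM -ec mulfVK.
move=> /dvdzP [c ->].
by rewrite /rat_is_int /tower_coord intrM mulfK ?intr_int.
Qed.

Lemma tower_coord_eq n z m w : y n *~ z = y m *~ w ->
  rat_is_int (tower_coord n z - tower_coord m w).
Proof.
move=> e; rewrite -(tower_coord_lift n z m) -(tower_coord_lift m w n).
rewrite [(n + m)%N]addnC -tower_coordB; apply/tower_coord_intP/tower_mulz_eq0.
by rewrite mulrzBr -tower_liftz [(m + n)%N]addnC -tower_liftz e subrr.
Qed.

Hypothesis span_full : forall a, tower_span a.

Definition tower_phi a : rat :=
  let: exist n en := cid (span_full a) in let: exist z _ := cid en in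
  tower_coord n z.

Lemma tower_phi_coord a n z :
  a = y n *~ z -> rat_is_int (tower_phi a - tower_coord n z).
Proof.
rewrite /tower_phi; case: cid => n' en'; case: cid => z' /= ez' ez.
by apply: tower_coord_eq; rewrite -ez' -ez.
Qed.

Lemma tower_phiD a b :
  rat_is_int (tower_phi (a + b) - tower_phi a - tower_phi b).
Proof.
have [n [z ea]] := span_full a; have [m [w eb]] := span_full b.
have eab : a + b = y (m + n) *~ (z * (p ^ m)%N%:Z + w * (p ^ n)%N%:Z).
  by rewrite mulrzDr -tower_liftz [(m + n)%N]addnC -tower_liftz ea eb.
have -> : tower_phi (a + b) - tower_phi a - tower_phi b =
    tower_phi (a + b)
      - tower_coord (m + n) (z * (p ^ m)%N%:Z + w * (p ^ n)%N%:Z)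
    - (tower_phi a - tower_coord n z) - (tower_phi b - tower_coord m w).
  rewrite tower_coordD tower_coord_lift [(m + n)%N]addnC tower_coord_lift.
  by ring.
by rewrite /rat_is_int; apply: rpredB; [apply: rpredB|]; exact: tower_phi_coord.
Qed.

Lemma tower_phi_padic a : p_adic_frac p (tower_phi a).
Proof.
rewrite /tower_phi; case: cid => n en; case: cid => z _ /=.
by exists n.+1; rewrite /rat_is_int /tower_coord mulfVK ?intr_int ?natr_expp_neq0.
Qed.

Lemma tower_phi_surj q :
  p_adic_frac p q -> exists a, rat_is_int (tower_phi a - q).
Proof.
case=> k /intrP [c ec]; exists (y k *~ (c * p%:Z)).
suff -> : q = tower_coord k (c * p%:Z) by apply: tower_phi_coord.
have Pk := natr_expp_neq0 k.
have p_neq0 : (p%:R : rat) != 0 := natr_expp_neq0 1.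
rewrite /tower_coord intrM /= -ec expnS natrM.
by field; rewrite p_neq0 Pk.
Qed.

Lemma tower_phi_int a : rat_is_int (tower_phi a) <-> a = 0.
Proof.
have [n [z ea]] := span_full a; have phi_z := tower_phi_coord ea.
rewrite /rat_is_int -[tower_phi a](subrK (tower_coord n z)) rpredDl // ea.
exact: iff_trans (tower_coord_intP n z) (iff_sym (tower_mulz_eq0 n z)).
Qed.

End Tower.

End NoProperSumCover.

Theorem quasicyclic_of_no_proper_sum_cover (A : zmodType) :
  no_proper_sum_cover A -> (forall x : A, exists a, ~ zspan x a) ->
  (exists a : A, a <> 0) ->
  exists p (phi : A -> rat), [/\ prime p,
    forall a b, rat_is_int (phi (a + b) - phi a - phi b),
    forall a, p_adic_frac p (phi a),
    forall q, p_adic_frac p q -> exists a, rat_is_int (phi a - q) &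
    forall a, rat_is_int (phi a) <-> a = 0].
Proof.
move=> cover not_cyclic [a a_neq0].
have [p [x1 [p_pr x1_neq0 x1p]]] :=
  exists_prime_order a_neq0 (torsion_of_no_proper_sum_cover cover a).
have [g g_div] : exists g : A -> A, forall b, g b *+ p = b.
  have [g eg] := choice (divisible_of_not_cyclic cover p_pr not_cyclic).
  by exists g => b; rewrite -eg.
have span_full := tower_span_full cover g_div p_pr x1_neq0
  (pgroup_of_prime_order cover p_pr x1_neq0 x1p).
exists p, (tower_phi p span_full); split => //.
- exact: tower_phiD.
- exact: tower_phi_padic.
- exact: tower_phi_surj.
- exact: tower_phi_int.
Qed.

Section GroupFacts.
Variables (G : Type) (mul : G -> G -> G) (one : G) (inv : G -> G).
Hypothesis HG : group_axioms mul one inv.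

Let mulgA x y z : mul x (mul y z) = mul (mul x y) z := Defs.mulA HG x y z.
Let mul1g x : mul one x = x := Defs.mul1g HG x.
Let mulVg x : mul (inv x) x = one := Defs.mulVg HG x.
Let mulgV x : mul x (inv x) = one := Defs.mulgV HG x.

Local Notation subgroup := (is_subgroup mul one inv).
Local Notation gen := (gen mul one inv).
Local Notation derived1 := (derived mul one inv 1).

Lemma mulKg x y : mul (inv x) (mul x y) = y.
Proof. by rewrite mulgA mulVg mul1g. Qed.

Lemma mulKVg x y : mul x (mul (inv x) y) = y.
Proof. by rewrite mulgA mulgV mul1g. Qed.

Lemma invg_uniq x y : mul x y = one -> y = inv x.
Proof. by move=> e; rewrite -(mulKg x y) e (Defs.mulg1 HG). Qed.

Lemma invgK x : inv (inv x) = x.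
Proof. by symmetry; apply: invg_uniq; rewrite mulVg. Qed.

Lemma invgM x y : inv (mul x y) = mul (inv y) (inv x).
Proof. by symmetry; apply: invg_uniq; rewrite -mulgA mulKVg mulgV. Qed.

Lemma invg1 : inv one = one.
Proof. by symmetry; apply: invg_uniq; rewrite mul1g. Qed.

Lemma gen_subgroup A : subgroup (gen A).
Proof.
split; first by move=> H [H1 _].
split; first by move=> x y gx gy H sH AH; apply: sH.2.1; [apply: gx | apply: gy].
by move=> x gx H sH AH; apply: sH.2.2; apply: gx.
Qed.

Lemma mem_gen (A : G -> Prop) a : A a -> gen A a.
Proof. by move=> Aa H _; apply. Qed.

Lemma gen_mono (A B : G -> Prop) x : (forall y, A y -> B y) -> gen A x -> gen B x.
Proof. by move=> AB gx H sH BH; apply: gx => // y Ay; apply/BH/AB. Qed.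

Lemma derived1_subgroup : subgroup derived1.
Proof. exact: gen_subgroup. Qed.

Lemma derived1_commg h k : derived1 (Defs.commg mul inv h k).
Proof. by apply: mem_gen; exists h, k. Qed.

(* The [x] whose conjugate lies in [derived1] form a subgroup containing every
   commutator. *)
Lemma derived1_conj g x : derived1 x -> derived1 (mul (inv g) (mul x g)).
Proof.
pose cj y := mul (inv g) (mul y g).
have cjM y z : cj (mul y z) = mul (cj y) (cj z) by rewrite /cj -!mulgA mulKVg.
have cjV y : cj (inv y) = inv (cj y) by rewrite /cj !invgM invgK mulgA.
have [_ [dM dV]] := derived1_subgroup.
move=> dx; apply: (dx (fun y => derived1 (cj y))).
  split; first by rewrite /cj mul1g mulVg; case: derived1_subgroup.
  split=> [y z dy dz|y dy]; first by rewrite cjM; apply: dM.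
  by rewrite cjV; apply: dV.
move=> _ [h [k [_ [_ ->]]]].
by rewrite /Defs.commg !cjM !cjV; apply: derived1_commg.
Qed.

Lemma exists_notin_derived1 :
  soluble mul one inv -> ~ finitely_generated mul one inv ->
  exists x, ~ derived1 x.
Proof.
move=> [n derived_n_trivial] not_fg; apply: contrapT => /forallNP derived1_full.
have derived_full m y : derived mul one inv m y.
  elim: m y => [//|m IH] y /=.
  apply: (gen_mono _ (contrapT (derived1_full y))) => _ [h [k [_ [_ ->]]]].
  by exists h, k.
apply: not_fg; exists nil => x H [H1 _] _.
by rewrite (derived_n_trivial x (derived_full n x)).
Qed.

Definition ab_equiv x y := derived1 (mul (inv x) y).

Lemma ab_equiv_refl x : ab_equiv x x.
Proof. by rewrite /ab_equiv mulVg; case: derived1_subgroup. Qed.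

Lemma ab_equiv_sym x y : ab_equiv x y -> ab_equiv y x.
Proof. by move=> r; have := derived1_subgroup.2.2 _ r; rewrite invgM invgK. Qed.

Lemma ab_equiv_trans x y z : ab_equiv x y -> ab_equiv y z -> ab_equiv x z.
Proof.
by move=> r1 r2; have := derived1_subgroup.2.1 _ _ r1 r2; rewrite -mulgA mulKVg.
Qed.

Lemma ab_equivM x x' y y' :
  ab_equiv x x' -> ab_equiv y y' -> ab_equiv (mul x y) (mul x' y').
Proof.
move=> r1 r2; have := derived1_subgroup.2.1 _ _ (derived1_conj y r1) r2.
by rewrite /ab_equiv invgM -!mulgA mulKVg.
Qed.

Lemma ab_equivV x x' : ab_equiv x x' -> ab_equiv (inv x) (inv x').
Proof.
move=> r; have := derived1_conj (inv x') (derived1_subgroup.2.2 _ r).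
by rewrite /ab_equiv !invgM !invgK -!mulgA mulKVg.
Qed.

Lemma ab_equivC x y : ab_equiv (mul x y) (mul y x).
Proof.
rewrite /ab_equiv invgM; have := derived1_commg y x.
by rewrite /Defs.commg -!mulgA.
Qed.

End GroupFacts.

Arguments gen_subgroup {G mul one inv} A.
Arguments derived1_subgroup {G mul one inv}.

Definition abelianization G (mul : G -> G -> G) one inv
    (HG : group_axioms mul one inv) : Type :=
  {S : G -> Prop | exists x, S = ab_equiv mul one inv x}.

HB.instance Definition _ G mul one inv HG :=
  gen_eqMixin (@abelianization G mul one inv HG).
HB.instance Definition _ G mul one inv HG :=
  gen_choiceMixin (@abelianization G mul one inv HG).

Section AbelianizationZmodule.
Variables (G : Type) (mul : G -> G -> G) (one : G) (inv : G -> G).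
Hypothesis HG : group_axioms mul one inv.
Local Notation Gab := (abelianization HG).
Local Notation ab_equiv := (ab_equiv mul one inv).

Definition ab_proj x : Gab := exist _ (ab_equiv x) (ex_intro _ x erefl).

Lemma ab_projP x y : ab_proj x = ab_proj y <-> ab_equiv x y.
Proof.
split=> [/(congr1 sval) /= ->|r]; first exact: (ab_equiv_refl HG y).
apply: eq_exist; apply: funext => z; apply: propext.
split=> [r'|r']; first exact: (ab_equiv_trans HG (ab_equiv_sym HG r) r').
exact: (ab_equiv_trans HG r r').
Qed.

Lemma ab_proj_surj (a : Gab) : exists x, a = ab_proj x.
Proof. by case: a => S [x ex]; exists x; apply: eq_exist. Qed.

Definition ab_repr (a : Gab) : G := sval (cid (svalP a)).

Lemma ab_reprK x : ab_equiv (ab_repr (ab_proj x)) x.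
Proof.
by apply/ab_projP; apply: eq_exist; rewrite /ab_repr; case: cid => y /= <-.
Qed.

Definition ab_add a b := ab_proj (mul (ab_repr a) (ab_repr b)).
Definition ab_opp a := ab_proj (inv (ab_repr a)).

Lemma ab_addE x y : ab_add (ab_proj x) (ab_proj y) = ab_proj (mul x y).
Proof. by apply/ab_projP; apply: (ab_equivM HG); apply: ab_reprK. Qed.

Lemma ab_oppE x : ab_opp (ab_proj x) = ab_proj (inv x).
Proof. by apply/ab_projP; apply: (ab_equivV HG); apply: ab_reprK. Qed.

Lemma ab_addA : associative ab_add.
Proof.
move=> a b c; have [x ->] := ab_proj_surj a; have [y ->] := ab_proj_surj b.
by have [z ->] := ab_proj_surj c; rewrite !ab_addE (Defs.mulA HG).
Qed.

Lemma ab_addC : commutative ab_add.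
Proof.
move=> a b; have [x ->] := ab_proj_surj a; have [y ->] := ab_proj_surj b.
by rewrite !ab_addE; apply/ab_projP; apply: ab_equivC.
Qed.

Lemma ab_add0 : left_id (ab_proj one) ab_add.
Proof.
by move=> a; have [x ->] := ab_proj_surj a; rewrite ab_addE (Defs.mul1g HG).
Qed.

Lemma ab_addN : left_inverse (ab_proj one) ab_opp ab_add.
Proof.
move=> a; have [x ->] := ab_proj_surj a.
by rewrite ab_oppE ab_addE (Defs.mulVg HG).
Qed.

End AbelianizationZmodule.

HB.instance Definition _ G mul one inv HG :=
  GRing.isZmodule.Build (@abelianization G mul one inv HG)
    (@ab_addA G mul one inv HG) (@ab_addC G mul one inv HG)
    (@ab_add0 G mul one inv HG) (@ab_addN G mul one inv HG).

Section AbelianizationProperties.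
Variables (G : Type) (mul : G -> G -> G) (one : G) (inv : G -> G).
Hypothesis HG : group_axioms mul one inv.
Local Notation Gab := (abelianization HG).
Local Notation ab_proj := (ab_proj HG).
Local Notation subgroup := (is_subgroup mul one inv).
Local Notation proper := (proper_subgroup mul one inv).
Local Notation gen := (gen mul one inv).
Local Notation derived1 := (derived mul one inv 1).

Lemma ab_projM x y : ab_proj (mul x y) = ab_proj x + ab_proj y.
Proof. exact/esym/ab_addE. Qed.

Lemma ab_projV x : ab_proj (inv x) = - ab_proj x.
Proof. exact/esym/ab_oppE. Qed.

Lemma ab_proj_eq0 x : ab_proj x = 0 <-> derived1 x.
Proof.
have := ab_projP HG one x; rewrite /ab_equiv (invg1 HG) (Defs.mul1g HG) => h.
by split=> [e|dx]; [apply/h/esym | apply/esym/h].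
Qed.

Lemma mem_of_ab_proj (S : G -> Prop) s x : subgroup S ->
  (forall d, derived1 d -> S d) -> S s -> ab_proj s = ab_proj x -> S x.
Proof.
move=> sS S_derived1 Ss /ab_projP dsx; rewrite -(mulKVg HG s x).
by apply: sS.2.1 => //; apply: S_derived1.
Qed.

Lemma ab_preimage_proper (H : Gab -> Prop) :
  addsubgroup H -> ~ (forall a, H a) -> proper (fun x => H (ab_proj x)).
Proof.
move=> sH H_proper; split.
  split; first exact: sH.1.
  split=> [x y Hx Hy|x Hx]; first by rewrite ab_projM; apply: addsubgroupD.
  by rewrite ab_projV; apply: addsubgroupN.
have /existsNP [a Ha] := H_proper.
by have [x ex] := ab_proj_surj a; exists x; rewrite -ex.
Qed.

Hypothesis no_two_proper_generate : forall K L : G -> Prop,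
  proper K -> proper L -> ~ (forall x, gen (fun y => K y \/ L y) x).

Lemma ab_no_proper_sum_cover : no_proper_sum_cover Gab.
Proof.
move=> H K sH sK cover.
have [H_full|H_proper] := pselect (forall a, H a); first by left.
have [K_full|K_proper] := pselect (forall a, K a); first by right.
case: (no_two_proper_generate (ab_preimage_proper sH H_proper)
  (ab_preimage_proper sK K_proper)) => x.
have [_ [gen_mul _]] : subgroup (gen (fun y => H (ab_proj y) \/ K (ab_proj y))).
  exact: gen_subgroup.
have [h [k [Hh Kk e]]] := cover (ab_proj x).
have [y ey] := ab_proj_surj h; have [z ez] := ab_proj_surj k.
have yz_x : ab_proj (mul y z) = ab_proj x by rewrite ab_projM -ey -ez e.
apply: (mem_of_ab_proj (gen_subgroup _) _ _ yz_x).
  by move=> d /ab_proj_eq0 d0; apply: mem_gen; left; rewrite d0; exact: sH.1.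
by apply: gen_mul; apply: mem_gen; [left; rewrite -ey | right; rewrite -ez].
Qed.

Hypotheses (G_soluble : soluble mul one inv)
  (G_not_fg : ~ finitely_generated mul one inv).

Lemma ab_nontrivial : exists a : Gab, a <> 0.
Proof.
have [x dx] := exists_notin_derived1 G_soluble G_not_fg.
by exists (ab_proj x) => /ab_proj_eq0.
Qed.

Lemma ab_not_cyclic (a : Gab) : exists b, ~ zspan a b.
Proof.
apply: contrapT => /forallNP a_cyclic.
have [g eg] := ab_proj_surj a.
pose C := gen (fun y => y = g).
have [x0 dx0] := exists_notin_derived1 G_soluble G_not_fg.
have C_proper : proper C.
  split; first exact: gen_subgroup.
  apply: contrapT => /forallNP C_full; apply: G_not_fg; exists [:: g] => x.
  by apply: gen_mono (contrapT (C_full x)) => y ->; left.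
have derived1_proper : proper derived1.
  by split; [exact: derived1_subgroup | exists x0].
case: (no_two_proper_generate C_proper derived1_proper) => x.
set S := gen (fun y => C y \/ derived1 y).
have [S1 [SM SV]] : subgroup S by exact: gen_subgroup.
pose T b := exists2 s, S s & b = ab_proj s.
have sT : addsubgroup T.
  split; first by exists one.
  move=> _ _ [s Ss ->] [t St ->]; exists (mul s (inv t)).
    by apply: SM => //; apply: SV.
  by rewrite ab_projM ab_projV.
have Ta : T a by exists g; [apply: mem_gen; left; apply: mem_gen | rewrite eg].
have [z ez] := contrapT (a_cyclic (ab_proj x)).
have [s Ss es] : T (ab_proj x) by rewrite ez; apply: addsubgroupMz.
apply: (mem_of_ab_proj (gen_subgroup _) _ Ss (esym es)).
by move=> d dd; apply: mem_gen; right.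
Qed.

End AbelianizationProperties.

Theorem mainTheorem9 (G : Type) (mul : G -> G -> G) (one : G) (inv : G -> G)
  (HG : group_axioms mul one inv)
  (Hsol : soluble mul one inv)
  (Hnfg : ~ finitely_generated mul one inv)
  (Hgen : forall K L : G -> Prop,
      proper_subgroup mul one inv K -> proper_subgroup mul one inv L ->
      ~ (forall x, gen mul one inv (fun y => K y \/ L y) x)) :
  exists p : nat, prime p /\ abelianization_quasicyclic mul one inv p.
Proof.
have [p [phi [p_pr phiD phi_padic phi_surj phi_int]]] :=
  quasicyclic_of_no_proper_sum_cover (ab_no_proper_sum_cover Hgen)
    (ab_not_cyclic Hgen Hsol Hnfg) (ab_nontrivial HG Hsol Hnfg).
exists p; split => //; exists (fun x => phi (ab_proj HG x)).
split; [|split; [|split]].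
- by move=> x y; rewrite ab_projM; apply: phiD.
- by move=> x; apply: phi_padic.
- move=> q /phi_surj [a ha]; have [x ex] := ab_proj_surj a.
  by exists x; rewrite -ex.
- by move=> x; apply: iff_trans (phi_int _) (ab_proj_eq0 HG x).
Qed.
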